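(* If graded posets $(P,\le_P)$ and $(Q,\le_Q)$ each admit a symmetric boolean decomposition, then the product poset $(P\times Q,\le_{P\times Q})$ admits a symmetric boolean decomposition.
   Context: The product order is $(p,q)\le_{P\times Q}(p',q')$ iff $p\le_P p'$ and $q\le_Q q'$; if $P,Q$ are graded of ranks $m,n$ then $P\times Q$ is graded of rank $m+n$ with $\mathrm{rk}(p,q)=\mathrm{rk}(p)+\mathrm{rk}(q)$. Let $\mathrm B_m$ be the boolean lattice of subsets of an $m$-element set. For a graded poset $R$ of rank $N$, a partition $\{R_1,\dots,R_k\}$ of $R$ is a symmetric boolean decomposition if for each $i$ there is an integer $j$ with $0\le j\le N/2$ and a bijection $\rho_i:\mathrm B_{N-2j}\to R_i$ that sends cover relations of $\mathrm B_{N-2j}$ to cover relations of $R$ and sends elements of rank $r$ to elements of rank $j+r$ in $R$. *)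

From mathcomp Require Import all_boot.
Set Implicit Arguments. Unset Strict Implicit. Unset Printing Implicit Defensive.

Definition strict (T : eqType) (le : rel T) (x y : T) : bool := le x y && (x != y).

Definition covers (T : finType) (le : rel T) (x y : T) : bool :=
  strict le x y && [forall z, ~~ (strict le x z && strict le z y)].

Definition is_minimal (T : finType) (le : rel T) (x : T) : Prop :=
  forall y, le y x -> y = x.
Definition is_maximal (T : finType) (le : rel T) (x : T) : Prop :=
  forall y, le x y -> y = x.

Definition graded (T : finType) (le : rel T) (rk : T -> nat) (N : nat) : Prop :=
  [/\ reflexive le, antisymmetric le, transitive le &
      [/\ (forall x y, covers le x y -> rk y = (rk x).+1),
      (forall x, is_minimal le x -> rk x = 0) &
      (forall x, is_maximal le x -> rk x = N)]].

(* The boolean lattice B_m : subsets of 'I_m ordered by inclusion, rank = cardinality. *)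
Definition B_le (m : nat) : rel {set 'I_m} := fun A B => A \subset B.

Definition sym_bool_block (T : finType) (le : rel T) (rk : T -> nat) (N : nat)
    (S : {set T}) : Prop :=
  exists j : nat, 2 * j <= N /\
  exists rho : {set 'I_(N - 2 * j)} -> T,
    [/\ injective rho,
        S = [set rho A | A : {set 'I_(N - 2 * j)}],
        (forall A B, covers (@B_le (N - 2 * j)) A B -> covers le (rho A) (rho B)) &
        (forall A, rk (rho A) = j + #|A|)].

Definition has_sbd (T : finType) (le : rel T) (rk : T -> nat) (N : nat) : Prop :=
  exists Pt : {set {set T}},
    partition Pt [set: T] /\ forall S, S \in Pt -> sym_bool_block le rk N S.

Definition prod_le (T1 T2 : finType) (le1 : rel T1) (le2 : rel T2) : rel (T1 * T2) :=
  fun x y => le1 x.1 y.1 && le2 x.2 y.2.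
Definition prod_rk (T1 T2 : finType) (rk1 : T1 -> nat) (rk2 : T2 -> nat) (x : T1 * T2) : nat :=
  rk1 x.1 + rk2 x.2.

From mathcomp Require Import all_boot.
From mathcomp Require Import zify.
Set Implicit Arguments. Unset Strict Implicit. Unset Printing Implicit Defensive.

(* Given decompositions {S_i} of P and {T_k} of Q, the product sets S_i x T_k
   form a decomposition of P x Q.  The main ingredient is the identification
   B_a x B_b = B_(a+b): a subset A of 'I_(a+b) is split into its left part
   [lsp A] (in 'I_a) and right part [rsp A] (in 'I_b), and a cover A <. B in
   B_(a+b) changes exactly one of the two parts by a cover, the other staying
   fixed.  Hence if rho1 : B_(m-2j) -> S and rho2 : B_(n-2k) -> T are the
   block parametrisations, A |-> (rho1 (lsp A), rho2 (rsp A)) parametrises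
   S x T by B_(m+n-2(j+k)), maps covers to covers of the product order and
   shifts ranks by j + k. *)

Section SplitSubsets.
Variables a b : nat.

Definition lsp (A : {set 'I_(a + b)}) : {set 'I_a} := [set i | lshift b i \in A].
Definition rsp (A : {set 'I_(a + b)}) : {set 'I_b} := [set i | @rshift a b i \in A].
Definition glue (B1 : {set 'I_a}) (B2 : {set 'I_b}) : {set 'I_(a + b)} :=
  lshift b @: B1 :|: @rshift a b @: B2.

Lemma mem_glue_l B1 B2 i : (lshift b i \in glue B1 B2) = (i \in B1).
Proof.
rewrite /glue inE mem_imset; last exact: lshift_inj.
by case: (i \in B1) => //=; apply/imsetP => [[j _ /eqP]]; rewrite eq_lrshift.
Qed.

Lemma mem_glue_r B1 B2 i : (rshift a i \in glue B1 B2) = (i \in B2).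
Proof.
rewrite /glue inE (mem_imset _ _ (@rshift_inj a b)).
case: (i \in B2); rewrite ?orbT // orbF; apply/imsetP => [[j _ /eqP]].
by rewrite eq_sym eq_lrshift.
Qed.

Lemma lsp_glue B1 B2 : lsp (glue B1 B2) = B1.
Proof. by apply/setP => i; rewrite inE mem_glue_l. Qed.

Lemma rsp_glue B1 B2 : rsp (glue B1 B2) = B2.
Proof. by apply/setP => i; rewrite inE mem_glue_r. Qed.

Lemma glue_sp (A : {set 'I_(a + b)}) : glue (lsp A) (rsp A) = A.
Proof.
apply/setP => x; rewrite -(splitK x); case: (split x) => i /=.
  by rewrite mem_glue_l inE.
by rewrite mem_glue_r inE.
Qed.

Lemma sp_inj (A B : {set 'I_(a + b)}) : lsp A = lsp B -> rsp A = rsp B -> A = B.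
Proof. by move=> eL eR; rewrite -(glue_sp A) -(glue_sp B) eL eR. Qed.

Lemma card_sp (A : {set 'I_(a + b)}) : #|A| = #|lsp A| + #|rsp A|.
Proof.
rewrite -{1}(glue_sp A) /glue cardsU !card_imset; try exact: lshift_inj;
  try exact: rshift_inj.
suff -> : lshift b @: lsp A :&: @rshift a b @: rsp A = set0 by rewrite cards0 subn0.
apply/setP => x; rewrite !inE.
by apply/negP => /andP [/imsetP [i _ ->] /imsetP [j _ /eqP]]; rewrite eq_lrshift.
Qed.

Lemma lsp_sub (A B : {set 'I_(a + b)}) : A \subset B -> lsp A \subset lsp B.
Proof. by move/subsetP => sAB; apply/subsetP => i; rewrite !inE; apply: sAB. Qed.

Lemma rsp_sub (A B : {set 'I_(a + b)}) : A \subset B -> rsp A \subset rsp B.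
Proof. by move/subsetP => sAB; apply/subsetP => i; rewrite !inE; apply: sAB. Qed.

End SplitSubsets.

Lemma coversBP m (A B : {set 'I_m}) :
  covers (@B_le m) A B <-> A \subset B /\ #|B| = #|A|.+1.
Proof.
rewrite /covers /strict /B_le; split.
  move=> /andP [/andP [sAB nAB] /forallP noMid].
  have pAB : A \proper B by rewrite properEneq nAB sAB.
  split=> //; have [_ [x xB xA]] := properP pAB.
  have sAxA : A \subset x |: A by apply: subsetUr.
  have sxAB : x |: A \subset B by rewrite subUset sub1set xB sAB.
  have nAxA : A != x |: A by apply: contraNneq xA => ->; rewrite setU11.
  have exAB : x |: A = B.
    by apply/eqP; have := noMid (x |: A); rewrite sAxA sxAB nAxA /= negbK.
  by rewrite -exAB cardsU1 xA.
move=> [sAB cardB]; rewrite sAB /=; apply/andP; split.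
  by apply/eqP => eAB; move: cardB; rewrite eAB; lia.
apply/forallP => z; apply/negP => /andP [/andP [sAz nAz] /andP [szB nzB]].
have ltAz : #|A| < #|z| by apply: proper_card; rewrite properEneq nAz sAz.
have ltzB : #|z| < #|B| by apply: proper_card; rewrite properEneq nzB szB.
lia.
Qed.

Lemma covers_sp a b (A B : {set 'I_(a + b)}) :
  covers (@B_le (a + b)) A B ->
  (lsp A = lsp B /\ covers (@B_le b) (rsp A) (rsp B)) \/
  (rsp A = rsp B /\ covers (@B_le a) (lsp A) (lsp B)).
Proof.
move=> /coversBP [sAB]; rewrite (card_sp A) (card_sp B) => cardB.
have sL := lsp_sub sAB; have sR := rsp_sub sAB.
have cL := subset_leq_card sL; have cR := subset_leq_card sR.
have [eL|eL] : #|lsp B| = #|lsp A| \/ #|lsp B| = #|lsp A|.+1 by lia.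
- left; split; first by apply/eqP; rewrite eqEcard sL eL leqnn.
  by apply/coversBP; split=> //; lia.
- right; split; first by apply/eqP; rewrite eqEcard sR; lia.
  by apply/coversBP.
Qed.

Section ProductOrder.
Variables (P Q : finType) (leP : rel P) (leQ : rel Q).

Lemma covers_prod_l p p' q : reflexive leQ -> antisymmetric leQ ->
  covers leP p p' -> covers (prod_le leP leQ) (p, q) (p', q).
Proof.
move=> reflQ antiQ; rewrite /covers /strict /prod_le /=.
move=> /andP [/andP [lepp' npp'] /forallP noMid]; rewrite lepp' reflQ /=.
apply/andP; split; first by apply: contra npp' => /eqP [->].
apply/forallP => [[z1 z2]] /=; apply/negP.
move=> /andP [/andP [/andP [l1 l2] n1] /andP [/andP [l3 l4] n2]].
have ez2 : z2 = q by apply: antiQ; rewrite l4 l2.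
subst z2; have := noMid z1; rewrite l1 l3 /=.
by rewrite (contra_neq (fun e : p = z1 => congr1 (pair^~ q) e) n1)
           (contra_neq (fun e : z1 = p' => congr1 (pair^~ q) e) n2).
Qed.

Lemma covers_prod_r p q q' : reflexive leP -> antisymmetric leP ->
  covers leQ q q' -> covers (prod_le leP leQ) (p, q) (p, q').
Proof.
move=> reflP antiP; rewrite /covers /strict /prod_le /=.
move=> /andP [/andP [leqq' nqq'] /forallP noMid]; rewrite leqq' reflP /=.
apply/andP; split; first by apply: contra nqq' => /eqP [->].
apply/forallP => [[z1 z2]] /=; apply/negP.
move=> /andP [/andP [/andP [l1 l2] n1] /andP [/andP [l3 l4] n2]].
have ez1 : z1 = p by apply: antiP; rewrite l3 l1.
subst z1; have := noMid z2; rewrite l2 l4 /=.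
by rewrite (contra_neq (fun e : q = z2 => congr1 (pair p) e) n1)
           (contra_neq (fun e : z2 = q' => congr1 (pair p) e) n2).
Qed.

Variables (rkP : P -> nat) (rkQ : Q -> nat).
Hypotheses (reflP : reflexive leP) (antiP : antisymmetric leP).
Hypotheses (reflQ : reflexive leQ) (antiQ : antisymmetric leQ).

Lemma sym_bool_block_prod m n S T :
  sym_bool_block leP rkP m S -> sym_bool_block leQ rkQ n T ->
  sym_bool_block (prod_le leP leQ) (prod_rk rkP rkQ) (m + n) (setX S T).
Proof.
move=> [j [hj [rP [injP defS covP rkPE]]]] [k [hk [rQ [injQ defT covQ rkQE]]]].
exists (j + k); split; first lia.
have -> : m + n - 2 * (j + k) = (m - 2 * j) + (n - 2 * k) by lia.
exists (fun A => (rP (lsp A), rQ (rsp A))); split.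
- by move=> A B [/injP eL /injQ eR]; apply: sp_inj.
- apply/setP => [[x y]]; rewrite defS defT in_setX; apply/andP/imsetP.
    move=> [/imsetP [B1 _ ->] /imsetP [B2 _ ->]].
    by exists (glue B1 B2); rewrite ?lsp_glue ?rsp_glue.
  by move=> [A _ [-> ->]]; split; apply: imset_f.
- move=> A B /covers_sp [[-> /covQ] | [-> /covP]].
    exact: covers_prod_r.
  exact: covers_prod_l.
- by move=> A; rewrite /prod_rk /= rkPE rkQE (card_sp A); lia.
Qed.

End ProductOrder.

Lemma partition_setX (T1 T2 : finType) (P1 : {set {set T1}}) (P2 : {set {set T2}})
    (D1 : {set T1}) (D2 : {set T2}) :
  partition P1 D1 -> partition P2 D2 ->
  partition [set setX S T | S in P1, T in P2] (setX D1 D2).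
Proof.
move=> /and3P [/eqP cov1 triv1 nz1] /and3P [/eqP cov2 triv2 nz2].
apply/and3P; split.
- apply/eqP/setP => [[x y]]; rewrite in_setX -cov1 -cov2; apply/bigcupP/andP.
    move=> [_ /imset2P [S T SP1 TP2 ->]]; rewrite in_setX => /andP [xS yT].
    by split; apply/bigcupP; [exists S | exists T].
  move=> [/bigcupP [S SP1 xS] /bigcupP [T TP2 yT]].
  by exists (setX S T); [apply: imset2_f | rewrite in_setX xS yT].
- apply/trivIsetP => _ _ /imset2P [S T SP1 TP2 ->] /imset2P [S' T' SP1' TP2' ->].
  apply: contraR; rewrite -setI_eq0 => /set0Pn [[x y]].
  rewrite !inE => /andP [/andP [xS yT] /andP [xS' yT']].
  by rewrite -(def_pblock triv1 SP1 xS) -(def_pblock triv1 SP1' xS')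
             -(def_pblock triv2 TP2 yT) -(def_pblock triv2 TP2' yT').
- apply/imset2P => [[S T SP1 TP2 eST]].
  have /set0Pn [x xS] : S != set0 by apply: contraNneq nz1 => <-.
  have /set0Pn [y yT] : T != set0 by apply: contraNneq nz2 => <-.
  by have := in_set0 (x, y); rewrite eST in_setX xS yT.
Qed.

Theorem mainTheorem16 (P Q : finType) (leP : rel P) (leQ : rel Q)
    (rkP : P -> nat) (rkQ : Q -> nat) (m n : nat) :
  graded leP rkP m -> graded leQ rkQ n ->
  has_sbd leP rkP m -> has_sbd leQ rkQ n ->
  has_sbd (prod_le leP leQ) (prod_rk rkP rkQ) (m + n).
Proof.
move=> [reflP antiP _ _] [reflQ antiQ _ _] [PtP [partP blockP]] [PtQ [partQ blockQ]].
exists [set setX S T | S in PtP, T in PtQ]; split.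
  have -> : [set: P * Q] = setX [set: P] [set: Q] by apply/setP => -[x y]; rewrite !inE.
  exact: partition_setX.
move=> _ /imset2P [S T SP TQ ->].
exact: sym_bool_block_prod (blockP S SP) (blockQ T TQ).
Qed.
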